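(* Let $G$ be a simple graph with $n$ vertices $v_1,\dots,v_n$ and $m\ge1$ edges, where $d_i$ is the degree of $v_i$. Then $$\mathcal E(G)\ge\frac{2m}{\sqrt{\max_{1\le i\le n}\sum_{j:\,v_i\sim v_j}d_j}}.$$
   Context: The adjacency matrix of $G$ is $\mathrm{Adj}(G)=[a_{ij}]$ with $a_{ij}=1$ if $v_i$ is adjacent to $v_j$ (written $v_i\sim v_j$) and $0$ otherwise. If $\lambda_1(G),\dots,\lambda_n(G)$ are the eigenvalues of $\mathrm{Adj}(G)$, the energy of $G$ is $\mathcal E(G)=\sum_{i=1}^n|\lambda_i(G)|$. *)

From mathcomp Require Import all_boot all_order all_algebra all_field.
Set Implicit Arguments. Unset Strict Implicit. Unset Printing Implicit Defensive.
Import Order.TTheory GRing.Theory Num.Theory.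
Local Open Scope ring_scope.

Definition simple_graph (n : nat) (e : rel 'I_n) : Prop :=
  symmetric e /\ irreflexive e.

Definition degree (n : nat) (e : rel 'I_n) (i : 'I_n) : nat := #|[set j | e i j]|.

Definition edges (n : nat) (e : rel 'I_n) : {set {set 'I_n}} :=
  [set E : {set 'I_n} | [exists i, exists j, e i j && (E == [set i; j])]].

Definition nedges (n : nat) (e : rel 'I_n) : nat := #|edges e|.

Definition adj (n : nat) (e : rel 'I_n) : 'M[algC]_n :=
  \matrix_(i, j) (e i j)%:R.

(* energy: sum of absolute values of the eigenvalues (with multiplicity).
   [rs] is a list of eigenvalues with multiplicity iff the characteristic
   polynomial factors as prod (X - r). *)
Definition eigenvalue_list (n : nat) (A : 'M[algC]_n) (rs : seq algC) : Prop :=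
  char_poly A = \prod_(r <- rs) ('X - r%:P).

Definition energy_of (rs : seq algC) : algC := \sum_(r <- rs) `|r|.

Definition nbr_deg_sum (n : nat) (e : rel 'I_n) (i : 'I_n) : nat :=
  \sum_(j | e i j) degree e j.

(* The trace of A^2 equals both the sum of the degrees, i.e. 2m, and (by
   Schur triangularisation) the sum of the squared eigenvalues, so
   2m <= \sum |l|^2 <= (max |l|) E(G).  If l is an eigenvalue of A then l^2
   is one of A^2, so |l|^2 is bounded by the largest absolute row sum of A^2,
   and the i-th row sum of A^2 is the sum of the degrees of the neighbours
   of v_i. *)

From mathcomp Require Import all_boot all_order all_algebra all_field.
Import Order.TTheory GRing.Theory Num.Theory.
Set Implicit Arguments.
Unset Strict Implicit.
Unset Printing Implicit Defensive.

Local Open Scope ring_scope.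

Lemma char_poly_conj (R : comUnitRingType) n (A P : 'M[R]_n) :
  P \in unitmx -> char_poly (P *m A *m invmx P) = char_poly A.
Proof.
move=> Pu; rewrite /char_poly.
have -> : char_poly_mx (P *m A *m invmx P) =
   map_mx polyC P *m char_poly_mx A *m map_mx polyC (invmx P).
  rewrite /char_poly_mx !map_mxM mulmxBr mulmxBl -!mulmxA -!map_mxM.
  by congr (_ - _); rewrite -scalar_mxC mulmxA -map_mxM mulmxV // map_mx1 mul1mx.
rewrite !det_mulmx !det_map_mx mulrC mulrA -rmorphM -det_mulmx.
by rewrite mulVmx // det1 rmorph1 mul1r.
Qed.

Lemma trig_mulmx_diag (R : pzRingType) n (A B : 'M[R]_n) i :
  is_trig_mx A -> is_trig_mx B -> (A *m B) i i = A i i * B i i.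
Proof.
move=> /is_trig_mxP trigA /is_trig_mxP trigB.
rewrite mxE (bigD1 i) //= big1 ?addr0 // => k /negPf neq_ki.
case: (ltngtP i k) => [lt_ik|lt_ki|/val_inj eq_ik]; last by rewrite eq_ik eqxx in neq_ki.
- by rewrite trigA ?mul0r.
- by rewrite trigB ?mulr0.
Qed.

Lemma sum_sqr_eigenvalues (C : numClosedFieldType) n (A : 'M[C]_n) (rs : seq C) :
  char_poly A = \prod_(r <- rs) ('X - r%:P) -> \sum_(r <- rs) r ^+ 2 = \tr (A *m A).
Proof.
case: n => [|n] in A * => charA.
  have /size0nil -> : size rs = 0%N.
    by have := size_char_poly A; rewrite charA size_prod_XsubC => -[].
  by rewrite big_nil /mxtrace big_ord0.
have [P /unitarymx_unit Pu] := Schur A (ltn0Sn n).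
rewrite /similar_to /conjmx pinvmxE //.
set T := P *m A *m invmx P => trigT.
have charT : char_poly T = \prod_(i < n.+1) ('X - (T i i)%:P).
  by rewrite -char_poly_trig.
have perm_rs : perm_eq rs [seq T i i | i <- index_enum 'I_n.+1].
  by apply: prod_XsubC_eq; rewrite -charA -(char_poly_conj A Pu) charT big_map.
have -> : A *m A = invmx P *m (T *m T) *m P.
  by rewrite /T -!mulmxA !mulKmx // !mulmxA mulmxKV // mulmxKV.
rewrite (perm_big _ perm_rs) big_map mxtrace_mulC mulmxA mulmxV // mul1mx.
by rewrite /mxtrace; under [RHS]eq_bigr do rewrite trig_mulmx_diag // -expr2.
Qed.

Lemma eigenvalue_sqr (F : fieldType) n (A : 'M[F]_n) a :
  eigenvalue A a -> eigenvalue (A *m A) (a ^+ 2).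
Proof.
move=> /eigenvalueP [v vA v_neq0]; apply/eigenvalueP; exists v => //.
by rewrite mulmxA vA -scalemxAl vA scalerA -expr2.
Qed.

Lemma eigenvalue_norm_le_row_sum (C : numFieldType) n (A : 'M[C]_n) a c :
  (forall i, \sum_j `|A i j| <= c) -> eigenvalue A a -> `|a| <= c.
Proof.
move=> rowA /eigenvalueP [v vA v_neq0].
pose S := \sum_j `|v 0 j|.
have S_gt0 : 0 < S.
  rewrite lt_def sumr_ge0 ?andbT //; apply/negP => /eqP/psumr_eq0P v0.
  by move/negP: v_neq0; apply; apply/eqP/rowP => j; rewrite mxE; apply/eqP; rewrite -normr_eq0 v0.
have entry j : `|a| * `|v 0 j| <= \sum_i `|v 0 i| * `|A i j|.
  have := congr1 (fun w : 'rV_n => w 0 j) vA; rewrite /= !mxE -normrM => <-.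
  by apply: le_trans (ler_norm_sum _ _ _) _; apply: ler_sum => i _; rewrite normrM.
rewrite -(ler_pM2r S_gt0); apply: (@le_trans _ _ (\sum_i `|v 0 i| * c)).
  rewrite /S mulr_sumr; apply: le_trans (ler_sum _ (fun j _ => entry j)) _.
  rewrite exchange_big /=; apply: ler_sum => i _.
  by rewrite -mulr_sumr ler_wpM2l.
by rewrite /S -mulr_suml mulrC.
Qed.

Lemma card_sum_mem (T : finType) (A : {pred T}) : #|A| = (\sum_x (x \in A))%N.
Proof. by rewrite -sum1_card big_mkcond; apply: eq_bigr => x _; case: (x \in A). Qed.

Lemma set2_inj (T : finType) (i : T) : injective (fun j => [set i; j]).
Proof.
move=> j k /setP eq_sets.
have := eq_sets j; rewrite !inE eqxx orbT => /esym/orP [/eqP j_i | /eqP //].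
by have := eq_sets k; rewrite !inE eqxx orbT j_i orbb => /eqP ->.
Qed.

Section SimpleGraph.
Variables (n : nat) (e : rel 'I_n).
Hypothesis (e_sym : symmetric e) (e_irr : irreflexive e).

Lemma card_edge E : E \in edges e -> #|E| = 2%N.
Proof.
rewrite inE => /existsP [i /existsP [j /andP [eij /eqP ->]]].
by rewrite cards2; case: eqP eij => [-> | //]; rewrite e_irr.
Qed.

Lemma edges_at_vertex i :
  [set E in edges e | i \in E] = (fun j => [set i; j]) @: [set j | e i j].
Proof.
apply/setP => E; rewrite !inE; apply/andP/imsetP => [[] | [j]].
  move=> /existsP [a /existsP [b /andP [eab /eqP ->]]].
  rewrite !inE => /orP [] /eqP ->; first by exists b; rewrite ?inE.
  by exists a; rewrite ?inE 1?e_sym // setUC.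
rewrite inE => eij ->; split; last by rewrite !inE eqxx.
by apply/existsP; exists i; apply/existsP; exists j; rewrite eij eqxx.
Qed.

Lemma degree_edges i : degree e i = #|[set E in edges e | i \in E]|.
Proof. by rewrite edges_at_vertex card_imset //; apply: set2_inj. Qed.

Lemma handshake : (\sum_i degree e i)%N = (2 * nedges e)%N.
Proof.
have degree_sum i : degree e i = (\sum_(E in edges e) (i \in E))%N.
  rewrite degree_edges -sum1_card big_mkcond [RHS]big_mkcond /=; apply: eq_bigr => E _.
  by rewrite inE; case: (E \in edges e); case: (i \in E).
under eq_bigr do rewrite degree_sum.
rewrite exchange_big /=.
under eq_bigr => E E_edge do rewrite -card_sum_mem card_edge //.
by rewrite sum_nat_const mulnC.
Qed.

Lemma adj_mulE i j : (adj e *m adj e) i j = (\sum_k e i k * e k j)%N%:R.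
Proof. by rewrite mxE natr_sum; apply: eq_bigr => k _; rewrite !mxE natrM. Qed.

Lemma row_sum_adj_sqr i :
  \sum_j `|(adj e *m adj e) i j| = (nbr_deg_sum e i)%:R.
Proof.
under eq_bigr do rewrite adj_mulE normr_nat.
rewrite -natr_sum exchange_big /nbr_deg_sum [in RHS]big_mkcond /=.
congr _%:R; apply: eq_bigr => k _.
rewrite -big_distrr /= /degree card_sum_mem.
by case: (e i k); rewrite ?mul1n ?mul0n //; apply: eq_bigr => j _; rewrite inE.
Qed.

Lemma mxtrace_adj_sqr : \tr (adj e *m adj e) = (\sum_i degree e i)%:R.
Proof.
rewrite /mxtrace natr_sum; apply: eq_bigr => i _.
rewrite adj_mulE /degree card_sum_mem; congr _%:R; apply: eq_bigr => j _.
by rewrite inE (e_sym j i); case: (e i j).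
Qed.

Lemma adj_eigenvalue_sqr_le r :
  eigenvalue (adj e) r -> `|r| ^+ 2 <= (\max_i nbr_deg_sum e i)%:R.
Proof.
move=> /eigenvalue_sqr; rewrite -normrX; apply: eigenvalue_norm_le_row_sum => i.
by rewrite row_sum_adj_sqr ler_nat leq_bigmax.
Qed.

End SimpleGraph.

Lemma energy_of_ge_div (rs : seq algC) (s c : algC) :
  0 <= s -> {in rs, forall r, `|r| <= s} -> c <= \sum_(r <- rs) `|r| ^+ 2 ->
  c / s <= energy_of rs.
Proof.
move=> s_ge0 rs_le c_le.
have [->|s_neq0] := eqVneq s 0.
  by rewrite invr0 mulr0; apply: sumr_ge0 => r _; apply: normr_ge0.
have s_gt0 : 0 < s by rewrite lt_def s_neq0.
rewrite ler_pdivrMr // (le_trans c_le) // /energy_of mulr_suml !big_seq.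
by apply: ler_sum => r r_in; rewrite expr2 ler_wpM2l ?rs_le.
Qed.

Theorem theorem5p1 (n : nat) (e : rel 'I_n) (rs : seq algC) :
  simple_graph e ->
  (1 <= nedges e)%N ->
  eigenvalue_list (adj e) rs ->
  energy_of rs >=
    (2 * nedges e)%:R / sqrtC ((\max_(i < n) nbr_deg_sum e i)%N)%:R.
Proof.
(* For m = 0 the right-hand side is 0. *)
move=> [e_sym e_irr] _ charA.
apply: energy_of_ge_div; first by rewrite sqrtC_ge0 ler0n.
  move=> r; rewrite -root_prod_XsubC -charA -eigenvalue_root_char.
  move=> /adj_eigenvalue_sqr_le r_le.
  by rewrite -(sqrCK (normr_ge0 r)) ler_sqrtC ?nnegrE ?exprn_ge0 ?ler0n.
have -> : (2 * nedges e)%:R = `|\sum_(r <- rs) r ^+ 2|.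
  by rewrite (sum_sqr_eigenvalues charA) mxtrace_adj_sqr // handshake // normr_nat.
by apply: le_trans (ler_norm_sum _ _ _) _; apply: ler_sum => r _; rewrite normrX.
Qed.
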